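(* Let $n$ be a positive even integer, $0\le a<b$ and $d>0$. If a set $A\subseteq\mathbb{R}^2$ is totally $n$-dissected at the interval $(a,b)$ with thickness $d$, and $a<\cot(\pi/n)$, then $A$ is not drawable.
   Context: For $X\subseteq\mathbb{R}^2$ let $N(X)=\{x: |x-y|<1 \text{ for some } y\in X\}$. Let $\mathcal{D}_1=\{N(A_1): A_1\subseteq\mathbb{R}^2\}$ and for $m\ge 2$ let $\mathcal{D}_m=\{D\cup N(A_m): D\in\mathcal{D}_{m-1}, A_m\subseteq\mathbb{R}^2\}$ if $m$ is odd and $\mathcal{D}_m=\{D\setminus N(A_m): D\in\mathcal{D}_{m-1}, A_m\subseteq\mathbb{R}^2\}$ if $m$ is even; a set is drawable if it lies in $\bigcup_m\mathcal{D}_m$. Let $\ell$ be a ray emanating from $P$, and let $P_1,P_2\in\ell$ be the points at distance $a$ and $b$ from $P$. Consider the two rectangles, one on each side of the line through $\ell$, having $P_1P_2$ as a side and other side length $d$. $A$ is dissected by $\ell$ at $(a,b)$ with thickness $d$ if the interior of one of these rectangles is contained in $A$ and the interior of the other is disjoint from $A$; the dissection is clockwise if the rectangle contained in $A$ lies on the clockwise side of $\ell$ (the side swept by rotating $\ell$ clockwise about $P$), and counterclockwise otherwise. $A$ is totally $n$-dissected at $(a,b)$ with thickness $d$ if there are rays $\ell_1,\dots,\ell_n$ emanating from a common point, in this cyclic order, dividing the plane into $n$ equal angles, such that $A$ is dissected by each $\ell_i$ at $(a,b)$ with thickness $d$ and cyclically adjacent rays have opposite orientations. *)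

From Stdlib Require Import Reals Lra Lia.
Open Scope R_scope.

Definition point := (R * R)%type.
Definition pset := point -> Prop.

Definition dist (x y : point) : R :=
  sqrt ((fst x - fst y) ^ 2 + (snd x - snd y) ^ 2).

Definition N (X : pset) : pset := fun x => exists y, X y /\ dist x y < 1.

(* D m S : S belongs to the family D_m (m >= 1); set membership in the
   family is up to extensional equality of sets. *)
Fixpoint D (m : nat) (X : pset) : Prop :=
  match m with
  | O => False
  | S m' =>
      match m' with
      | O => exists A1 : pset, forall x, X x <-> N A1 x
      | S _ => if Nat.odd m then
               exists (D0 : pset) (Am : pset), D m' D0 /\
                 forall x, X x <-> (D0 x \/ N Am x)
             else
               exists (D0 : pset) (Am : pset), D m' D0 /\
                 forall x, X x <-> (D0 x /\ ~ N Am x)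
      end
  end.

Definition drawable (A : pset) : Prop := exists m : nat, D m A.

(* The ray l from P with direction angle th, i.e. unit direction
   u = (cos th, sin th).  The clockwise side of l (the side swept by
   rotating l clockwise about P) is the side of the unit normal
   v = (sin th, - cos th).  The open rectangle with side P1P2
   (P1 = P + a u, P2 = P + b u) on that side with other side d is
   { P + s u + t v | a < s < b, 0 < t < d }; the one on the
   counterclockwise side has -d < t < 0. *)
Definition strip (P : point) (th a b t1 t2 : R) : pset :=
  fun x => exists s t, a < s < b /\ t1 < t < t2 /\
    x = (fst P + s * cos th + t * sin th, snd P + s * sin th - t * cos th).

Definition rect_cw (P : point) (th a b d : R) : pset := strip P th a b 0 d.
Definition rect_ccw (P : point) (th a b d : R) : pset := strip P th a b (- d) 0.

Definition dissected (A : pset) (P : point) (th a b d : R) (cw : bool) : Prop :=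
  if cw then
    (forall x, rect_cw P th a b d x -> A x) /\
    (forall x, rect_ccw P th a b d x -> ~ A x)
  else
    (forall x, rect_ccw P th a b d x -> A x) /\
    (forall x, rect_cw P th a b d x -> ~ A x).

Definition totally_dissected (A : pset) (n : nat) (a b d : R) : Prop :=
  exists (P : point) (th0 : R) (o : nat -> bool),
    (forall i : nat, (i < n)%nat ->
       dissected A P (th0 + 2 * PI * INR i / INR n) a b d (o i)) /\
    (forall i : nat, (i < n)%nat -> o i <> o ((i + 1) mod n)%nat).

(** Write α = π/n, so adjacent rays make the angle 2α.  Since adjacent rays
    have opposite orientations, the part of A along a ray faces the part of A
    along its neighbour.  A unit disc that touches a ray from the A-side at
    distance p < cot α from the apex, without entering the other side, has its
    centre near (p, 1) in the frame of that ray, so it contains the point at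
    distance p on the neighbouring ray and spills over to the non-A side
    there.  Hence if N(Y)
    avoids the non-A rectangles of all rays, it also avoids slightly thinner
    and shorter A-rectangles.  Peeling off the last layer of a drawable set
    D ∪ N(Y) or D \ N(Y) therefore leaves a set D that is still totally
    dissected, with smaller parameters and with a < cot α preserved, and at
    the bottom N(A_1) would have to miss its own A-rectangles. *)

From Pilot Require Import Defs.
From Stdlib Require Import Reals Lra Lia Classical.
Open Scope R_scope.

(** Coordinates (s, t) are taken in the frame of a ray, t > 0 being the side
    of A: a disc of radius 1 centred at (p, q) meeting the thin box
    (a', b') × (0, d') also meets the outer box (a, b) × (-d, 0) of this ray
    or the outer box of the neighbouring ray, rotated by beta. *)
Definition discs_escape (beta a b d a' b' d' : R) : Prop :=
  forall p q u v, a' < u < b' -> 0 < v < d' -> (u - p) ^ 2 + (v - q) ^ 2 < 1 ->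
  (exists s t, a < s < b /\ - d < t < 0 /\ (s - p) ^ 2 + (t - q) ^ 2 < 1) \/
  (exists s t, a < s < b /\ 0 < t < d /\
     (s * cos beta - t * sin beta - p) ^ 2 + (s * sin beta + t * cos beta - q) ^ 2 < 1).

Lemma margin_exists (sn cs a b : R) :
  0 < sn -> a < b -> a * sn < cs ->
  exists w, 0 < w /\ a + 6 * w <= b /\ (a + 6 * w) * sn < cs.
Proof.
  intros Hsn Hab Hcot.
  set (m := Rmin (b - a) ((cs - a * sn) / (2 * sn))).
  assert (Hm_pos : 0 < m) by (apply Rmin_pos; [lra | apply Rdiv_lt_0_compat; lra]).
  assert (Hm_b : m <= b - a) by apply Rmin_l.
  assert (Hm_cot : m * sn <= (cs - a * sn) / 2).
  { replace ((cs - a * sn) / 2) with ((cs - a * sn) / (2 * sn) * sn) by (field; lra).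
    apply Rmult_le_compat_r; [lra | apply Rmin_r]. }
  exists (m / 6); split; [lra | split; lra].
Qed.

(** The leading term is the squared distance from (p, 1) to the point at
    distance p on the ray at angle 2α; it is below 1 iff p sin α < cos α. *)
Lemma reflected_dist2 (sn cs p q t : R) : sn ^ 2 + cs ^ 2 = 1 ->
  (p * (1 - 2 * sn * sn) - t * (2 * sn * cs) - p) ^ 2
  + (p * (2 * sn * cs) + t * (1 - 2 * sn * sn) - q) ^ 2
  = 1 - 4 * p * sn * (cs - p * sn) + (q - 1) * (1 + q - 4 * p * sn * cs)
    + t * (t + 2 * (p * (2 * sn * cs) - q * (1 - 2 * sn * sn))).
Proof.
  intros Hpyth.
  transitivity (1 - 4 * p * sn * (cs - p * sn) + (q - 1) * (1 + q - 4 * p * sn * cs)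
    + t * (t + 2 * (p * (2 * sn * cs) - q * (1 - 2 * sn * sn)))
    + 4 * sn ^ 2 * (p ^ 2 + t ^ 2) * (sn ^ 2 + cs ^ 2 - 1)); [ring | rewrite Hpyth; ring].
Qed.

Lemma mul_le_of_abs_le (x y X Y : R) : Rabs x <= X -> Rabs y <= Y -> x * y <= X * Y.
Proof.
  intros Hx Hy. apply (Rle_trans _ (Rabs (x * y))); [apply RRle_abs |].
  rewrite Rabs_mult. apply Rmult_le_compat; auto using Rabs_pos.
Qed.

Lemma quad_lower_bound (sn cs x y p : R) :
  0 < sn -> 0 <= x <= p -> p <= y -> y * sn <= cs ->
  4 * x * sn * (cs - y * sn) <= 4 * p * sn * (cs - p * sn).
Proof.
  intros Hsn Hxp Hpy Hy.
  assert (0 <= (p - x) * sn * (cs - y * sn))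
    by (apply Rmult_le_pos; [apply Rmult_le_pos |]; lra).
  assert (0 <= p * sn * ((y - p) * sn))
    by (apply Rmult_le_pos; [apply Rmult_le_pos | apply Rmult_le_pos]; lra).
  nra.
Qed.

Lemma reflected_point_close (sn cs b mu p q v t : R) :
  sn ^ 2 + cs ^ 2 = 1 -> 0 <= p <= b -> 1 - v <= q <= 1 + v -> v <= 1 -> 0 < t <= 1 ->
  mu <= 4 * p * sn * (cs - p * sn) ->
  v < mu / (2 * (2 * b + 5)) -> t < mu / (2 * (2 * b + 5)) ->
  (p * (1 - 2 * sn * sn) - t * (2 * sn * cs) - p) ^ 2
  + (p * (2 * sn * cs) + t * (1 - 2 * sn * sn) - q) ^ 2 < 1.
Proof.
  intros Hpyth Hp Hq Hv Ht Hmu Hv_small Ht_small.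
  rewrite reflected_dist2 by exact Hpyth.
  assert (Hsin2 : Rabs (2 * sn * cs) <= 1).
  { apply Rabs_le. pose proof (pow2_ge_0 (sn - cs)). pose proof (pow2_ge_0 (sn + cs)). split; nra. }
  assert (Hcos2 : Rabs (1 - 2 * sn * sn) <= 1).
  { apply Rabs_le. pose proof (pow2_ge_0 sn). pose proof (pow2_ge_0 cs). split; nra. }
  assert (Hq2 : Rabs q <= 2) by (apply Rabs_le; lra).
  assert (Hp2 : Rabs p <= b) by (apply Rabs_le; lra).
  assert (Hq_term : (q - 1) * (1 + q - 4 * p * sn * cs) <= v * (2 * b + 3)).
  { apply mul_le_of_abs_le; [apply Rabs_le; lra |].
    pose proof (mul_le_of_abs_le p (2 * sn * cs) b 1 Hp2 Hsin2).
    pose proof (mul_le_of_abs_le (- p) (2 * sn * cs) b 1 ltac:(rewrite Rabs_Ropp; lra) Hsin2).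
    apply Rabs_le. lra. }
  assert (Ht_term : t * (t + 2 * (p * (2 * sn * cs) - q * (1 - 2 * sn * sn)))
                    <= t * (2 * b + 5)).
  { apply Rmult_le_compat_l; [lra |].
    pose proof (mul_le_of_abs_le p (2 * sn * cs) b 1 Hp2 Hsin2).
    pose proof (mul_le_of_abs_le (- q) (1 - 2 * sn * sn) 2 1
                  ltac:(rewrite Rabs_Ropp; lra) Hcos2).
    lra. }
  assert (Hscale : forall x, x < mu / (2 * (2 * b + 5)) -> 2 * (2 * b + 5) * x < mu).
  { intros x Hx. replace mu with (2 * (2 * b + 5) * (mu / (2 * (2 * b + 5)))) by (field; lra).
    apply Rmult_lt_compat_l; lra. }
  apply Hscale in Hv_small, Ht_small.
  nra.
Qed.

Lemma disc_near_edge (a b d w p q u v : R) :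
  0 < w -> a + 6 * w <= b -> a + 2 * w < u < a + 4 * w ->
  0 < v -> v < d -> v <= 1 -> 32 * v <= 3 * w ^ 2 ->
  (u - p) ^ 2 + (v - q) ^ 2 < 1 ->
  (forall s t, a < s < b -> - d < t < 0 -> 1 <= (s - p) ^ 2 + (t - q) ^ 2) ->
  a + w < p < a + 5 * w /\ 1 - v <= q <= 1 + v.
Proof.
  (* Moving the test point by w/2 towards p gains 3w²/4 in squared distance,
     more than the 4v(1 + v) <= 8v lost by reflecting its height v to -v. *)
  intros Hw Hb Hu Hv Hvd Hv1 Hvw Hdisc Hfar.
  assert (Hq : v - 1 < q < v + 1) by (pose proof (pow2_ge_0 (u - p)); split; nra).
  assert (Hp_lo : u - p < w).
  { apply Rnot_le_lt. intros Hfar_p.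
    pose proof (Hfar (u - w / 2) (- v) ltac:(lra) ltac:(lra)). nra. }
  assert (Hp_hi : p - u < w).
  { apply Rnot_le_lt. intros Hfar_p.
    pose proof (Hfar (u + w / 2) (- v) ltac:(lra) ltac:(lra)). nra. }
  split; [lra |].
  pose proof (Hfar p (- v) ltac:(lra) ltac:(lra)). split; nra.
Qed.

Lemma unit_disc_escape (alpha a b d : R) :
  0 < sin alpha -> 0 <= a -> a < b -> 0 < d -> a * sin alpha < cos alpha ->
  exists a' b' d', a <= a' /\ a' < b' /\ b' <= b /\ a' * sin alpha < cos alpha /\
    0 < d' /\ d' <= d /\ discs_escape (2 * alpha) a b d a' b' d'.
Proof.
  intros Hsn Ha Hab Hd Hcot.
  set (sn := sin alpha) in *. set (cs := cos alpha) in *.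
  assert (Hpyth : sn ^ 2 + cs ^ 2 = 1).
  { pose proof (sin2_cos2 alpha) as H. unfold Rsqr in H. unfold sn, cs. lra. }
  destruct (margin_exists sn cs a b Hsn Hab Hcot) as (w & Hw & Hwb & Hwcot).
  set (mu := 4 * (a + w) * sn * (cs - (a + 5 * w) * sn)).
  set (eps := mu / (2 * (2 * b + 5))).
  assert (Hmu : 0 < mu)
    by (unfold mu; apply Rmult_lt_0_compat; [apply Rmult_lt_0_compat |]; nra).
  assert (Heps : 0 < eps) by (apply Rdiv_lt_0_compat; lra).
  pose proof (Rmin_l d 1). pose proof (Rmin_r d 1).
  pose proof (Rmin_l eps (3 * w ^ 2 / 32)). pose proof (Rmin_r eps (3 * w ^ 2 / 32)).
  pose proof (Rmin_l (Rmin d 1) (Rmin eps (3 * w ^ 2 / 32))).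
  pose proof (Rmin_r (Rmin d 1) (Rmin eps (3 * w ^ 2 / 32))).
  set (d' := Rmin (Rmin d 1) (Rmin eps (3 * w ^ 2 / 32))) in *.
  exists (a + 2 * w), (a + 4 * w), d'.
  repeat split; try lra.
  { unfold d'. apply Rmin_pos; apply Rmin_pos; nra. }
  intros p q u v Hu Hv Hdisc.
  rewrite cos_2a_sin, sin_2a. fold sn cs.
  destruct (classic (exists s t, a < s < b /\ - d < t < 0 /\ (s - p) ^ 2 + (t - q) ^ 2 < 1))
    as [Hout | Hout]; [left; exact Hout | right].
  assert (Hfar : forall s t, a < s < b -> - d < t < 0 -> 1 <= (s - p) ^ 2 + (t - q) ^ 2).
  { intros s t Hs Ht. apply Rnot_lt_le. intros Hc. apply Hout. exists s, t. auto. }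
  destruct (disc_near_edge a b d w p q u v) as [Hp Hq]; try lra; [exact Hfar |].
  set (t := Rmin (Rmin d 1) eps / 2).
  assert (Ht : 0 < Rmin (Rmin d 1) eps) by (apply Rmin_pos; [apply Rmin_pos |]; lra).
  pose proof (Rmin_l (Rmin d 1) eps). pose proof (Rmin_r (Rmin d 1) eps).
  exists p, t. repeat split; try (unfold t; lra).
  apply (reflected_point_close sn cs b mu p q v t); fold eps; try (unfold t; lra).
  apply quad_lower_bound; lra.
Qed.

Definition side (c : bool) : R := if c then 1 else -1.

Definition ray_frame (P : point) (th : R) (c : bool) (s t : R) : point :=
  (fst P + s * cos th + side c * t * sin th, snd P + s * sin th - side c * t * cos th).

Definition box (P : point) (th : R) (c : bool) (a b t1 t2 : R) : pset :=
  fun x => exists s t, a < s < b /\ t1 < t < t2 /\ x = ray_frame P th c s t.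

Lemma cos_sin_sqr (th : R) : cos th ^ 2 + sin th ^ 2 = 1.
Proof. pose proof (sin2_cos2 th) as H. unfold Rsqr in H. lra. Qed.

Lemma ray_frame_negb P th c s t : ray_frame P th (negb c) s t = ray_frame P th c s (- t).
Proof. destruct c; unfold ray_frame, side; simpl; f_equal; ring. Qed.

Lemma ray_frame_periodic P th c s t : ray_frame P (th + 2 * PI) c s t = ray_frame P th c s t.
Proof.
  unfold ray_frame. rewrite cos_plus, sin_plus, cos_2PI, sin_2PI. f_equal; ring.
Qed.

Lemma ray_frame_rotate P th c beta s t :
  ray_frame P th c s t =
  ray_frame P (th + side c * beta) c (s * cos beta - t * sin beta) (s * sin beta + t * cos beta).
Proof.
  destruct c; unfold side;
    [rewrite Rmult_1_l, <- (Rplus_minus_r th beta) at 1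
    | replace (-1 * beta) with (- beta) by ring; rewrite <- (Rplus_minus_r th (- beta)) at 1];
    unfold ray_frame, side;
    rewrite cos_minus, sin_minus, ?cos_neg, ?sin_neg; f_equal; ring.
Qed.

Lemma ray_frame_surjective P th c y : exists p q, y = ray_frame P th c p q.
Proof.
  set (X := fst y - fst P). set (Y := snd y - snd P).
  exists (X * cos th + Y * sin th), (side c * (X * sin th - Y * cos th)).
  destruct y as [y1 y2]; unfold ray_frame; simpl in *; f_equal.
  - transitivity (fst P + X * (cos th ^ 2 + sin th ^ 2)).
    + rewrite cos_sin_sqr. unfold X. ring.
    + destruct c; unfold side; ring.
  - transitivity (snd P + Y * (cos th ^ 2 + sin th ^ 2)).
    + rewrite cos_sin_sqr. unfold Y. ring.
    + destruct c; unfold side; ring.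
Qed.

Lemma sqrt_lt_1_iff (x : R) : 0 <= x -> sqrt x < 1 <-> x < 1.
Proof.
  intros Hx. rewrite <- sqrt_1 at 1. split.
  - apply sqrt_lt_0_alt.
  - intros Hx1. apply sqrt_lt_1_alt. lra.
Qed.

Lemma ray_frame_dist_lt_1 P th c s t p q :
  Defs.dist (ray_frame P th c s t) (ray_frame P th c p q) < 1 <-> (s - p) ^ 2 + (t - q) ^ 2 < 1.
Proof.
  unfold Defs.dist.
  replace ((fst (ray_frame P th c s t) - fst (ray_frame P th c p q)) ^ 2
           + (snd (ray_frame P th c s t) - snd (ray_frame P th c p q)) ^ 2)
    with (((s - p) ^ 2 + (t - q) ^ 2) * (cos th ^ 2 + sin th ^ 2)).
  - rewrite cos_sin_sqr, Rmult_1_r. apply sqrt_lt_1_iff.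
    pose proof (pow2_ge_0 (s - p)). pose proof (pow2_ge_0 (t - q)). lra.
  - destruct c; unfold ray_frame, side; simpl; ring.
Qed.

Lemma box_negb P th c a b t1 t2 x :
  box P th (negb c) a b t1 t2 x <-> box P th c a b (- t2) (- t1) x.
Proof.
  split; intros (s & t & Hs & Ht & ->).
  - exists s, (- t). rewrite ray_frame_negb. repeat split; lra.
  - exists s, (- t). rewrite ray_frame_negb, Ropp_involutive. repeat split; lra.
Qed.

Lemma box_mono P th c a b t1 t2 a' b' t1' t2' x :
  a <= a' -> b' <= b -> t1 <= t1' -> t2' <= t2 ->
  box P th c a' b' t1' t2' x -> box P th c a b t1 t2 x.
Proof.
  intros Ha Hb Ht1 Ht2 (s & t & Hs & Ht & ->). exists s, t. repeat split; lra.
Qed.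

Lemma box_inhabited P th c a b t1 t2 : a < b -> t1 < t2 -> exists x, box P th c a b t1 t2 x.
Proof.
  intros Hab Ht. exists (ray_frame P th c ((a + b) / 2) ((t1 + t2) / 2)).
  exists ((a + b) / 2), ((t1 + t2) / 2). repeat split; lra.
Qed.

Lemma strip_box P th a b t1 t2 x : strip P th a b t1 t2 x <-> box P th true a b t1 t2 x.
Proof.
  split; intros (s & t & Hs & Ht & ->); exists s, t; repeat split; try lra;
    unfold ray_frame, side; f_equal; ring.
Qed.

Lemma dissected_box X P th a b d c :
  dissected X P th a b d c <->
  (forall x, box P th c a b 0 d x -> X x) /\ (forall x, box P th c a b (- d) 0 x -> ~ X x).
Proof.
  unfold dissected, rect_cw, rect_ccw.
  destruct c.
  - setoid_rewrite strip_box. tauto.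
  - assert (Hin : forall x, box P th false a b 0 d x <-> strip P th a b (- d) 0 x).
    { intros x. rewrite strip_box, (box_negb P th true), Ropp_0. reflexivity. }
    assert (Hout : forall x, box P th false a b (- d) 0 x <-> strip P th a b 0 d x).
    { intros x. rewrite strip_box, (box_negb P th true), Ropp_0, Ropp_involutive. reflexivity. }
    setoid_rewrite Hin. setoid_rewrite Hout. tauto.
Qed.

Lemma N_misses_thin_box (Y : pset) P th th' c beta a b d a' b' d' :
  discs_escape beta a b d a' b' d' ->
  (forall s t, ray_frame P th' c s t =
     ray_frame P th c (s * cos beta - t * sin beta) (s * sin beta + t * cos beta)) ->
  (forall x, box P th c a b (- d) 0 x -> ~ Defs.N Y x) ->
  (forall x, box P th' c a b 0 d x -> ~ Defs.N Y x) ->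
  forall x, box P th c a' b' 0 d' x -> ~ Defs.N Y x.
Proof.
  intros Hesc Hrot Hout Hout' x (u & v & Hu & Hv & ->) (y & HY & Hdist).
  destruct (ray_frame_surjective P th c y) as (p & q & ->).
  apply ray_frame_dist_lt_1 in Hdist.
  destruct (Hesc p q u v Hu Hv Hdist) as [(s & t & Hs & Ht & Hst) | (s & t & Hs & Ht & Hst)].
  - apply (Hout (ray_frame P th c s t)); [exists s, t; auto |].
    exists (ray_frame P th c p q). split; [exact HY | apply ray_frame_dist_lt_1; exact Hst].
  - apply (Hout' (ray_frame P th' c s t)); [exists s, t; auto |].
    exists (ray_frame P th c p q). split; [exact HY |].
    rewrite Hrot. apply ray_frame_dist_lt_1. exact Hst.
Qed.

Section Rays.

Variables (P : point) (th0 : R) (n : nat).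
Hypothesis n_pos : (0 < n)%nat.

Definition ray_angle (i : nat) : R := th0 + 2 * PI * INR i / INR n.

Definition alternating (o : nat -> bool) : Prop :=
  forall i, (i < n)%nat -> o i <> o ((i + 1) mod n)%nat.

Definition rays_dissect (X : pset) (o : nat -> bool) (a b d : R) : Prop :=
  forall i, (i < n)%nat -> dissected X P (ray_angle i) a b d (o i).

Lemma alternating_succ o i : alternating o -> (i < n)%nat -> o ((i + 1) mod n)%nat = negb (o i).
Proof. intros Halt Hi. specialize (Halt i Hi). destruct (o i), (o _); simpl; congruence. Qed.

Lemma alternating_negb o : alternating o -> alternating (fun i => negb (o i)).
Proof.
  intros Halt i Hi. rewrite (alternating_succ o i Halt Hi), Bool.negb_involutive.
  now destruct (o i).
Qed.

Lemma ray_frame_succ i x c s t : (i < n)%nat ->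
  ray_frame P (ray_angle ((i + 1) mod n) + x) c s t =
  ray_frame P (ray_angle i + 2 * (PI / INR n) + x) c s t.
Proof.
  intros Hi. assert (Hn : INR n <> 0) by (apply not_0_INR; lia).
  unfold ray_angle.
  destruct (Nat.eq_dec (i + 1) n) as [Hlast | Hnext].
  - rewrite Hlast, Nat.Div0.mod_same, <- ray_frame_periodic. f_equal.
    rewrite <- Hlast, plus_INR in Hn |- *. simpl INR. field. exact Hn.
  - rewrite Nat.mod_small by lia. f_equal. rewrite plus_INR. simpl INR. field. exact Hn.
Qed.

Lemma mod_pred_exists i : (i < n)%nat -> exists j, (j < n)%nat /\ ((j + 1) mod n)%nat = i.
Proof.
  intros Hi. destruct i as [|i].
  - exists (n - 1)%nat. split; [lia |].
    replace (n - 1 + 1)%nat with n by lia. apply Nat.Div0.mod_same.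
  - exists i. split; [lia |]. rewrite Nat.mod_small by lia. lia.
Qed.

Lemma ray_neighbor o i : alternating o -> (i < n)%nat ->
  exists j, (j < n)%nat /\ o j = negb (o i) /\
  forall s t, ray_frame P (ray_angle j + side (o i) * (2 * (PI / INR n))) (o i) s t =
              ray_frame P (ray_angle i) (o i) s t.
Proof.
  intros Halt Hi. destruct (o i) eqn:Hoi.
  - destruct (mod_pred_exists i Hi) as (j & Hj & <-).
    rewrite (alternating_succ o j Halt Hj) in Hoi.
    exists j. split; [exact Hj | split; [now destruct (o j) |]].
    intros s t. rewrite <- (Rplus_0_r (ray_angle ((j + 1) mod n))), ray_frame_succ by exact Hj.
    f_equal. unfold side. ring.
  - exists ((i + 1) mod n)%nat. split; [apply Nat.mod_upper_bound; lia |].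
    rewrite (alternating_succ o i Halt Hi), Hoi. split; [reflexivity |].
    intros s t. rewrite ray_frame_succ by exact Hi. f_equal. unfold side. ring.
Qed.

Section Shrink.

Variables (a b d a' b' d' : R).
Hypotheses (Ha' : a <= a') (Hb' : b' <= b) (Hd' : d' <= d).
Hypothesis escape : discs_escape (2 * (PI / INR n)) a b d a' b' d'.

Lemma N_misses_thin_boxes (Y : pset) o : alternating o ->
  (forall i, (i < n)%nat -> forall x, box P (ray_angle i) (o i) a b (- d) 0 x -> ~ Defs.N Y x) ->
  forall i, (i < n)%nat -> forall x, box P (ray_angle i) (o i) a' b' 0 d' x -> ~ Defs.N Y x.
Proof.
  intros Halt Hout i Hi.
  destruct (ray_neighbor o i Halt Hi) as (j & Hj & Hoj & Hframe).
  apply (N_misses_thin_box Y P (ray_angle i) (ray_angle j) (o i) (2 * (PI / INR n))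
           a b d a' b' d' escape).
  - intros s t. rewrite <- Hframe. apply ray_frame_rotate.
  - exact (Hout i Hi).
  - intros x Hx. apply (Hout j Hj). rewrite Hoj, box_negb, Ropp_0, Ropp_involutive. exact Hx.
Qed.

Lemma rays_dissect_union X D0 Am o : alternating o ->
  (forall x, X x <-> D0 x \/ Defs.N Am x) ->
  rays_dissect X o a b d -> rays_dissect D0 o a' b' d'.
Proof.
  intros Halt HX Hdis.
  pose proof (fun i Hi => proj1 (dissected_box _ _ _ _ _ _ _) (Hdis i Hi)) as Hbox.
  assert (HAm : forall i, (i < n)%nat -> forall x,
             box P (ray_angle i) (o i) a' b' 0 d' x -> ~ Defs.N Am x).
  { apply N_misses_thin_boxes; [exact Halt |].
    intros i Hi x Hx HN. apply (proj2 (Hbox i Hi) x Hx), HX. now right. }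
  intros i Hi. apply dissected_box. split.
  - intros x Hx.
    assert (HXx : X x)
      by (apply (proj1 (Hbox i Hi)), (box_mono _ _ _ _ _ _ _ a' b' 0 d'); auto; lra).
    apply HX in HXx as [HD0 | HN]; [exact HD0 | contradiction (HAm i Hi x Hx HN)].
  - intros x Hx HD0. apply (proj2 (Hbox i Hi) x).
    + apply (box_mono _ _ _ _ _ _ _ a' b' (- d') 0); auto; lra.
    + apply HX. now left.
Qed.

Lemma rays_dissect_difference X D0 Am o : alternating o ->
  (forall x, X x <-> D0 x /\ ~ Defs.N Am x) ->
  rays_dissect X o a b d -> rays_dissect D0 o a' b' d'.
Proof.
  intros Halt HX Hdis.
  pose proof (fun i Hi => proj1 (dissected_box _ _ _ _ _ _ _) (Hdis i Hi)) as Hbox.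
  assert (HAm : forall i, (i < n)%nat -> forall x,
             box P (ray_angle i) (negb (o i)) a' b' 0 d' x -> ~ Defs.N Am x).
  { apply (N_misses_thin_boxes Am (fun i => negb (o i))); [now apply alternating_negb |].
    intros i Hi x Hx HN. rewrite box_negb, Ropp_0, Ropp_involutive in Hx.
    destruct (proj1 (HX x) (proj1 (Hbox i Hi) x Hx)) as [_ HnN]. contradiction. }
  intros i Hi. apply dissected_box. split.
  - intros x Hx. apply HX, (proj1 (Hbox i Hi)), (box_mono _ _ _ _ _ _ _ a' b' 0 d'); auto; lra.
  - intros x Hx HD0. apply (proj2 (Hbox i Hi) x).
    + apply (box_mono _ _ _ _ _ _ _ a' b' (- d') 0); auto; lra.
    + apply HX. split; [exact HD0 |]. apply (HAm i Hi).
      rewrite box_negb, Ropp_0. exact Hx.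
Qed.

End Shrink.

Lemma rays_dissect_inhabited X o a b d : a < b -> 0 < d ->
  rays_dissect X o a b d -> exists x, X x.
Proof.
  intros Hab Hd Hdis.
  destruct (box_inhabited P (ray_angle 0) (o 0%nat) a b 0 d Hab Hd) as [x Hx].
  exists x. apply (proj1 (proj1 (dissected_box _ _ _ _ _ _ _) (Hdis 0%nat n_pos))), Hx.
Qed.

Lemma D_not_rays_dissect (m : nat) (X : pset) : D m X ->
  0 < sin (PI / INR n) ->
  forall o a b d, alternating o -> 0 <= a -> a < b -> 0 < d ->
  a * sin (PI / INR n) < cos (PI / INR n) -> ~ rays_dissect X o a b d.
Proof.
  intros HX Hsin. revert X HX.
  induction m as [|m IH]; intros X HX o a b d Halt Ha Hab Hd Hcot Hdis; [exact HX |].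
  destruct (unit_disc_escape (PI / INR n) a b d Hsin Ha Hab Hd Hcot)
    as (a' & b' & d' & Ha' & Hab' & Hb' & Hcot' & Hd'0 & Hd' & Hesc).
  destruct m as [|k].
  - (* N(A_1) is the union of the empty set and N(A_1). *)
    destruct HX as [A1 HA1].
    destruct (rays_dissect_inhabited (fun _ => False) o a' b' d') as [x []]; try lra.
    apply (rays_dissect_union a b d a' b' d' Ha' Hb' Hd' Hesc X _ A1 o Halt); [| exact Hdis].
    intros x. rewrite HA1. tauto.
  - simpl in HX. destruct (Nat.odd (S (S k))); destruct HX as (D0 & Am & HD0 & HX);
      apply (IH D0 HD0 o a' b' d'); try lra; try exact Halt.
    + eapply rays_dissect_union; eauto.
    + eapply rays_dissect_difference; eauto.
Qed.

End Rays.

Lemma sin_PI_div_pos (n : nat) : (2 <= n)%nat -> 0 < sin (PI / INR n).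
Proof.
  intros Hn. assert (Hn1 : 1 < INR n) by (apply lt_1_INR; lia).
  pose proof PI_RGT_0. apply sin_gt_0; [apply Rdiv_lt_0_compat; lra |].
  apply Rmult_lt_reg_r with (INR n); [lra |].
  unfold Rdiv. rewrite Rmult_assoc, Rinv_l by lra. nra.
Qed.

Theorem theorem4p6 (n : nat) (a b d : R) (A : pset) :
  (0 < n)%nat -> Nat.Even n ->
  0 <= a -> a < b -> 0 < d ->
  totally_dissected A n a b d ->
  a < cos (PI / INR n) / sin (PI / INR n) ->
  ~ drawable A.
Proof.
  intros Hn Heven Ha Hab Hd (P & th0 & o & Hdis & Halt) Hcot [m HA].
  (* Evenness is only needed to rule out n = 1. *)
  assert (Hsin : 0 < sin (PI / INR n)).
  { apply sin_PI_div_pos. destruct Heven as [k Hk]. lia. }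
  apply (D_not_rays_dissect P th0 n Hn m A HA Hsin o a b d Halt Ha Hab Hd); [| exact Hdis].
  apply (Rmult_lt_compat_r (sin (PI / INR n))) in Hcot; [| exact Hsin].
  unfold Rdiv in Hcot. rewrite Rmult_assoc, Rinv_l in Hcot by lra. lra.
Qed.
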